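(* Fix $C_1,C_2$ with $C_1>C_2>0$ and fix $C_3\in(0,C_{3,crit})$. Then $\mathfrak L(C_1,C_2,C_3,b)$ is strictly increasing in $b$ on $(b_-(C_3),b_+(C_3))$.
   Context: Let real constants $C_1,C_2$ be given with $2C_1+C_2>0$, and let $C_{3,crit}=\frac1{27}(2C_1+C_2)^3$. For $C_3\in(0,C_{3,crit})$, let $\phi_1<\phi_2<\phi_3$ be the roots of $2(\phi-C_1)^2(\phi+\frac{C_2}2)=C_3$; they satisfy $-\frac{C_2}{2}<\phi_1<\frac{C_1-C_2}{3}<\phi_2<C_1<\phi_3$. Let $U(\phi)=-\frac12\phi^2-\frac12C_2\phi-\frac12C_1C_2-\frac{C_3}{2(\phi-C_1)}$. Set $b_-(C_3)=U(\phi_2)$ and $b_+(C_3)=U(\phi_1)$. For $b\in(b_-(C_3),b_+(C_3))$, let $\phi_-<\phi_+$ be the two solutions of $U(\phi)=b$ with $\phi_1<\phi_-<\phi_2<\phi_+<C_1$. Define $$\mathfrak L(C_1,C_2,C_3,b)=2\int_{\phi_-}^{\phi_+}\frac{d\phi}{\sqrt{2(b-U(\phi))}}.$$ This is the period of the periodic orbit of $\frac12\dot\phi^2+U(\phi)=b$, which describes travelling waves of the DGH equation. *)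

From Stdlib Require Import Reals Lra.
From Coquelicot Require Import Coquelicot.
Open Scope R_scope.

Definition C3crit (C1 C2 : R) : R := (2 * C1 + C2) ^ 3 / 27.

Definition cubicC3 (C1 C2 phi : R) : R := 2 * (phi - C1) ^ 2 * (phi + C2 / 2).

Definition Upot (C1 C2 C3 phi : R) : R :=
  - (1/2) * phi ^ 2 - (1/2) * C2 * phi - (1/2) * C1 * C2 - C3 / (2 * (phi - C1)).

Definition period (C1 C2 C3 b phim phip : R) : R :=
  2 * RInt_gen (fun phi => 1 / sqrt (2 * (b - Upot C1 C2 C3 phi)))
              (at_right phim) (at_left phip).

From Stdlib Require Import Reals Lra Psatz.
From Coquelicot Require Import Coquelicot.
Open Scope R_scope.

(* Multiplying [b - U] by [C1 - phi] gives a cubic with roots [q < phi_- < phi_+], so the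
   period integrand is [sqrt ((C1 - phi) / (phi - q)) / sqrt ((phi - phi_-) (phi_+ - phi))] and
   the substitution [phi = c + r sin t] turns the period into a proper integral.  Raising [b]
   lowers [phi_-] and raises [phi_+] and [q], while [(C1 - q) (C1 - phi_-) (C1 - phi_+) = C3]
   stays fixed.  After folding [t] with [-t] the integrand is [w x + w y] with
   [w z = sqrt (z / (1 - z))]; both the larger argument [x] and the product [x y] grow, and since
   [z w'(z)] is nondecreasing this makes [w x + w y] grow. *)

Lemma asin_le x y : x <= y -> asin x <= asin y.
Proof.
  intros Hxy.
  destruct (Rle_dec x (-1)) as [Hx|Hx].
  { replace (asin x) with (- (PI / 2)) by (unfold asin; destruct (Rle_dec x (-1)); lra).
    apply asin_bound. }
  destruct (Rle_dec 1 y) as [Hy|Hy].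
  { replace (asin y) with (PI / 2) by
      (unfold asin; destruct (Rle_dec y (-1)); [lra|]; destruct (Rle_dec 1 y); lra).
    apply asin_bound. }
  apply sin_incr_0; try apply asin_bound.
  rewrite !sin_asin; lra.
Qed.

Lemma asin_m1 : asin (-1) = - (PI / 2).
Proof. unfold asin. destruct (Rle_dec (-1) (-1)); lra. Qed.

Lemma continuous_asin_m1 : continuous asin (-1).
Proof.
  assert (HPI := PI_RGT_0).
  apply filterlim_locally. intros eps.
  set (t := - (PI / 2) + Rmin (eps / 2) (PI / 2)).
  assert (Ht : - (PI / 2) < t <= 0).
  { assert (0 < Rmin (eps / 2) (PI / 2)) by (apply Rmin_case; pose proof (cond_pos eps); lra).
    assert (Rmin (eps / 2) (PI / 2) <= PI / 2) by apply Rmin_r.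
    unfold t; lra. }
  assert (Hsin : -1 < sin t).
  { replace (-1) with (sin (- (PI / 2))) by (rewrite sin_neg, sin_PI2; ring).
    apply sin_increasing_1; lra. }
  assert (Hd : 0 < sin t + 1) by lra.
  exists (mkposreal _ Hd). intros z Hz.
  change (Rabs (z - -1) < sin t + 1) in Hz. apply Rabs_def2 in Hz.
  change (Rabs (asin z - asin (-1)) < eps).
  rewrite asin_m1.
  assert (asin z <= t).
  { rewrite <- (asin_sin t) by lra. apply asin_le; lra. }
  assert (Rmin (eps / 2) (PI / 2) <= eps / 2) by apply Rmin_l.
  pose proof (asin_bound z). pose proof (cond_pos eps).
  rewrite Rabs_pos_eq; unfold t in *; lra.
Qed.

Lemma continuous_asin_1 : continuous asin 1.
Proof.
  apply (continuous_ext (fun z => - asin (- z))).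
  { intros z. rewrite asin_opp. apply Ropp_involutive. }
  apply (continuous_opp (fun z => asin (- z))).
  apply (continuous_comp Ropp asin).
  - exact (continuous_opp _ _ (continuous_id (1 : R))).
  - replace (- 1) with (-1) by ring. exact continuous_asin_m1.
Qed.

Lemma is_derive_asin x : -1 < x < 1 -> is_derive asin x (/ sqrt (1 - x²)).
Proof.
  intros Hx. apply is_derive_Reals.
  replace (/ sqrt (1 - x²)) with (derive_pt asin x (derivable_pt_asin x Hx))
    by (rewrite derive_pt_asin; field; apply Rgt_not_eq, sqrt_lt_R0; unfold Rsqr; nra).
  exact (proj2_sig (derivable_pt_asin x Hx)).
Qed.

Lemma filter_prod_at_right_at_left a b : a < b ->
  filter_prod (at_right a) (at_left b)
    (fun uv => forall x, Rmin (fst uv) (snd uv) <= x <= Rmax (fst uv) (snd uv) -> a < x < b).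
Proof.
  intros Hab. assert (Hd : 0 < b - a) by lra.
  apply (Filter_prod _ _ _ (fun x => a < x < b) (fun x => a < x < b)).
  - exists (mkposreal _ Hd). intros y Hy Hay.
    change (Rabs (y - a) < b - a) in Hy. apply Rabs_def2 in Hy. lra.
  - exists (mkposreal _ Hd). intros y Hy Hyb.
    change (Rabs (y - b) < b - a) in Hy. apply Rabs_def2 in Hy. lra.
  - intros u v Hu Hv x Hx. simpl in Hx.
    assert (a < Rmin u v) by (apply Rmin_glb_lt; lra).
    assert (Rmax u v < b) by (apply Rmax_lub_lt; lra).
    lra.
Qed.

Section Arcsine_substitution.

Variables (h : R -> R) (a b : R).
Hypothesis Hab : a < b.
Hypothesis Hh : forall x, a <= x <= b -> continuous h x.

Lemma continuous_arcsine_integrand t :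
  continuous (fun t => h ((a + b) / 2 + (b - a) / 2 * sin t)) t.
Proof.
  apply (continuous_comp (fun t => (a + b) / 2 + (b - a) / 2 * sin t) h).
  - apply (ex_derive_continuous (fun t => (a + b) / 2 + (b - a) / 2 * sin t)).
    auto_derive. exact I.
  - apply Hh. pose proof (SIN_bound t). nra.
Qed.

Lemma is_derive_arcsine_primitive (G : R -> R) x :
  (forall t, is_derive G t (h ((a + b) / 2 + (b - a) / 2 * sin t))) ->
  a < x < b ->
  is_derive (fun x => G (asin ((x - (a + b) / 2) / ((b - a) / 2)))) x
    (h x / sqrt ((x - a) * (b - x))).
Proof.
  intros HG Hx.
  set (c := (a + b) / 2). set (r := (b - a) / 2).
  assert (Hr : 0 < r) by (unfold r; lra).
  set (s := (x - c) / r).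
  assert (Hs : -1 < s < 1).
  { unfold s. split; [apply Rlt_div_r|apply Rlt_div_l]; unfold c, r in *; lra. }
  assert (H1s : 0 < 1 - s²) by (unfold Rsqr; nra).
  assert (Hsqrt : sqrt ((x - a) * (b - x)) = r * sqrt (1 - s²)).
  { replace ((x - a) * (b - x)) with (r * r * (1 - s²))
      by (unfold s, c, r, Rsqr; field; lra).
    rewrite sqrt_mult_alt by nra. rewrite sqrt_square by lra. reflexivity. }
  assert (Hsin : c + r * sin (asin s) = x).
  { rewrite sin_asin by lra. unfold s. field. lra. }
  replace (h x / sqrt ((x - a) * (b - x)))
    with (scal (scal (/ r) (/ sqrt (1 - s²))) (h (c + r * sin (asin s)))).
  2: { rewrite Hsin, Hsqrt. unfold scal; simpl; unfold mult; simpl.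
       assert (0 < sqrt (1 - s²)) by (apply sqrt_lt_R0; lra).
       field. split; lra. }
  apply (is_derive_comp G (fun x => asin ((x - c) / r))); [apply HG|].
  apply (is_derive_comp asin (fun x => (x - c) / r)); [apply is_derive_asin; exact Hs|].
  auto_derive; [lra|]. field. lra.
Qed.

Lemma continuous_arcsine_density x : a < x < b ->
  continuous (fun x => h x / sqrt ((x - a) * (b - x))) x.
Proof.
  intros Hx. apply (continuous_mult h (fun x => / sqrt ((x - a) * (b - x)))).
  - apply Hh. lra.
  - apply continuous_Rinv_comp.
    + apply continuous_sqrt_comp.
      apply (ex_derive_continuous (fun x => (x - a) * (b - x))). auto_derive. exact I.
    + apply Rgt_not_eq, sqrt_lt_R0. nra.
Qed.

Lemma arcsine_primitive_limits (G : R -> R) : (forall t, continuous G t) ->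
  filterlim (fun x => G (asin ((x - (a + b) / 2) / ((b - a) / 2)))) (at_right a)
    (locally (G (- (PI / 2)))) /\
  filterlim (fun x => G (asin ((x - (a + b) / 2) / ((b - a) / 2)))) (at_left b)
    (locally (G (PI / 2))).
Proof.
  intros HG. set (c := (a + b) / 2). set (r := (b - a) / 2).
  assert (HF : forall x, continuous asin ((x - c) / r) ->
                 continuous (fun x => G (asin ((x - c) / r))) x).
  { intros x Hasin. apply (continuous_comp (fun x => asin ((x - c) / r)) G); [|apply HG].
    apply (continuous_comp (fun x => (x - c) / r) asin); [|exact Hasin].
    apply (ex_derive_continuous (fun x => (x - c) / r)). auto_derive. unfold r. lra. }
  assert (Ha : (a - c) / r = -1) by (unfold c, r; field; lra).
  assert (Hb : (b - c) / r = 1) by (unfold c, r; field; lra).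
  split.
  - rewrite <- asin_m1, <- Ha.
    apply (filterlim_filter_le_1 _ (filter_le_within _)), HF.
    rewrite Ha. exact continuous_asin_m1.
  - rewrite <- asin_1, <- Hb.
    apply (filterlim_filter_le_1 _ (filter_le_within _)), HF.
    rewrite Hb. exact continuous_asin_1.
Qed.

(* If [G] is a primitive of the right-hand integrand, then [G (asin ((x - c) / r))], with [c]
   and [r] the centre and half-length of [[a, b]], is a primitive of the left-hand one on
   [(a, b)] that extends continuously to [a] and [b]. *)
Lemma is_RInt_gen_arcsine :
  is_RInt_gen (fun x => h x / sqrt ((x - a) * (b - x))) (at_right a) (at_left b)
    (RInt (fun t => h ((a + b) / 2 + (b - a) / 2 * sin t)) (- (PI / 2)) (PI / 2)).
Proof.
  set (hs := fun t => h ((a + b) / 2 + (b - a) / 2 * sin t)).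
  assert (Hhs : forall t, continuous hs t) by apply continuous_arcsine_integrand.
  assert (Hex : forall u v, ex_RInt hs u v)
    by (intros u v; apply (@ex_RInt_continuous R_CompleteNormedModule); intros; apply Hhs).
  set (G := (fun t => RInt hs 0 t) : R -> R).
  assert (HG : forall t, is_derive G t (hs t)).
  { intros t. apply (is_derive_RInt hs G 0); [|apply Hhs].
    apply filter_forall. intros y. apply (@RInt_correct R_CompleteNormedModule), Hex. }
  assert (HGc : forall t, continuous G t)
    by (intros t; apply (ex_derive_continuous G); eexists; apply HG).
  set (F := fun x => G (asin ((x - (a + b) / 2) / ((b - a) / 2)))).
  set (f := fun x => h x / sqrt ((x - a) * (b - x))).
  assert (HF : forall x, a < x < b -> is_derive F x (f x))
    by (intros x Hx; apply is_derive_arcsine_primitive; auto).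
  destruct (arcsine_primitive_limits G HGc) as [HFa HFb].
  replace (RInt hs (- (PI / 2)) (PI / 2)) with (G (PI / 2) - G (- (PI / 2))).
  2: { unfold G. rewrite <- (RInt_Chasles hs (- (PI / 2)) 0 (PI / 2)) by apply Hex.
       rewrite <- (opp_RInt_swap hs 0 (- (PI / 2))) by apply Hex.
       unfold plus, opp; simpl. ring. }
  apply (is_RInt_gen_ext (Derive F)).
  { generalize (filter_prod_at_right_at_left a b Hab). apply filter_imp.
    intros uv Huv x Hx. apply is_derive_unique, HF, Huv. lra. }
  apply is_RInt_gen_Derive; [| |exact HFa|exact HFb];
    generalize (filter_prod_at_right_at_left a b Hab); apply filter_imp; intros uv Huv x Hx;
    specialize (Huv x Hx).
  - eexists. apply HF, Huv.
  - apply (continuous_ext_loc _ f).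
    + apply (locally_interval _ x a b); try apply Huv.
      intros y Hay Hyb. symmetry. apply is_derive_unique, HF. simpl in *. lra.
    + apply continuous_arcsine_density, Huv.
Qed.

End Arcsine_substitution.

Lemma continuous_comp_opp (g : R -> R) t : continuous g (- t) -> continuous (fun t => g (- t)) t.
Proof.
  intros Hg. apply (continuous_comp Ropp g); [|exact Hg].
  apply (ex_derive_continuous Ropp). auto_derive. exact I.
Qed.

Lemma continuous_fold (g : R -> R) t : (forall t, continuous g t) ->
  continuous (fun t => g t + g (- t)) t.
Proof.
  intros Hg. apply (continuous_plus g (fun t => g (- t))); [apply Hg|].
  apply continuous_comp_opp, Hg.
Qed.

Lemma RInt_fold (g : R -> R) a : (forall t, continuous g t) ->
  RInt g (- a) a = RInt (fun t => g t + g (- t)) 0 a.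
Proof.
  intros Hg.
  assert (Hex : forall (f : R -> R) u v, (forall t, continuous f t) -> ex_RInt f u v)
    by (intros f u v Hf; apply (@ex_RInt_continuous R_CompleteNormedModule); intros; apply Hf).
  assert (Hgo : forall t, continuous (fun t => g (- t)) t)
    by (intros t; apply continuous_comp_opp, Hg).
  assert (Href : is_RInt (fun t => g (- t)) 0 a (RInt g (- a) 0)).
  { assert (H : is_RInt g (- 0) (- a) (RInt g 0 (- a)))
      by (rewrite Ropp_0; apply (@RInt_correct R_CompleteNormedModule), Hex, Hg).
    apply is_RInt_comp_opp, is_RInt_opp in H.
    replace (RInt g (- a) 0) with (opp (RInt g 0 (- a)))
      by (apply (opp_RInt_swap g), Hex, Hg).
    apply (is_RInt_ext _ _ _ _ _ (fun t _ => opp_opp (g (- t))) H). }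
  rewrite <- (RInt_Chasles g (- a) 0 a) by (apply Hex, Hg).
  rewrite (RInt_plus g (fun t => g (- t))) by (apply Hex; auto).
  rewrite (is_RInt_unique _ _ _ _ Href).
  apply Rplus_comm.
Qed.

Definition sqrt_odds (z : R) : R := sqrt (z / (1 - z)).

Lemma sqrt_odds_pos z : 0 < z < 1 -> 0 < sqrt_odds z.
Proof. intros Hz. apply sqrt_lt_R0, Rdiv_lt_0_compat; lra. Qed.

Lemma is_derive_sqrt_odds z : 0 < z < 1 ->
  is_derive sqrt_odds z (sqrt_odds z / (2 * z * (1 - z))).
Proof.
  intros Hz. pose proof (sqrt_odds_pos z Hz) as Hw.
  assert (Hsq : sqrt_odds z * sqrt_odds z = z / (1 - z))
    by (apply sqrt_sqrt, Rlt_le, Rdiv_lt_0_compat; lra).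
  unfold sqrt_odds in *. auto_derive.
  - repeat split; try lra. apply Rmult_lt_0_compat; [lra|]. apply Rinv_0_lt_compat; lra.
  - replace (z * / (1 + - z)) with (z / (1 - z)) by reflexivity.
    replace (sqrt (z / (1 - z)) / (2 * z * (1 - z)))
      with (sqrt (z / (1 - z)) * sqrt (z / (1 - z)) / (2 * z * (1 - z) * sqrt (z / (1 - z))))
      by (field; repeat split; lra).
    rewrite Hsq. field. repeat split; lra.
Qed.

Lemma continuous_sqrt_odds z : 0 < z < 1 -> continuous sqrt_odds z.
Proof.
  intros Hz. apply (ex_derive_continuous sqrt_odds). eexists. apply is_derive_sqrt_odds, Hz.
Qed.

Lemma sqrt_odds_le y z : 0 < y -> y <= z -> z < 1 -> sqrt_odds y <= sqrt_odds z.
Proof.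
  intros. apply sqrt_le_1_alt. unfold Rdiv.
  apply Rmult_le_compat; try lra.
  - apply Rlt_le, Rinv_0_lt_compat; lra.
  - apply Rinv_le_contravar; lra.
Qed.

Lemma sqrt_odds_lt y z : 0 < y -> y < z -> z < 1 -> sqrt_odds y < sqrt_odds z.
Proof.
  intros. apply sqrt_lt_1_alt. split.
  - apply Rlt_le, Rdiv_lt_0_compat; lra.
  - unfold Rdiv. apply Rlt_le_trans with (z * / (1 - y)).
    + apply Rmult_lt_compat_r; [apply Rinv_0_lt_compat|]; lra.
    + apply Rmult_le_compat_l; [lra|]. apply Rinv_le_contravar; lra.
Qed.

(* For [w = sqrt_odds], [z w'(z) = w(z) / (2 (1 - z))] is nondecreasing, which makes the sum
   below increase as its two arguments move apart with their product fixed. *)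
Lemma sqrt_odds_spread_le P y z : 0 < P -> 0 < y -> P <= y * y -> y <= z -> z < 1 ->
  sqrt_odds y + sqrt_odds (P / y) <= sqrt_odds z + sqrt_odds (P / z).
Proof.
  intros HP Hy0 Hy Hyz Hz.
  set (d := fun t => sqrt_odds t / (2 * t * (1 - t))
                     + sqrt_odds (P / t) / (2 * (P / t) * (1 - P / t)) * (- P / t ^ 2)).
  assert (Hrange : forall t, y <= t <= z -> 0 < P / t <= t /\ t < 1).
  { intros t Ht. split; [split|lra].
    - apply Rdiv_lt_0_compat; lra.
    - apply Rle_div_l; nra. }
  assert (Hd : forall t, y <= t <= z ->
    is_derive (fun t => sqrt_odds t + sqrt_odds (P / t)) t (d t)).
  { intros t Ht. destruct (Hrange t Ht) as [[HPt HPtt] Ht1].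
    apply (is_derive_plus sqrt_odds (fun t => sqrt_odds (P / t))).
    - apply is_derive_sqrt_odds. lra.
    - replace (sqrt_odds (P / t) / (2 * (P / t) * (1 - P / t)) * (- P / t ^ 2))
        with (scal (- P / t ^ 2) (sqrt_odds (P / t) / (2 * (P / t) * (1 - P / t))))
        by (unfold scal; simpl; unfold mult; simpl; ring).
      apply (is_derive_comp sqrt_odds (fun t => P / t)).
      + apply is_derive_sqrt_odds. lra.
      + auto_derive; [lra|]. field. lra. }
  assert (Hd0 : forall t, y <= t <= z -> 0 <= d t).
  { intros t Ht. destruct (Hrange t Ht) as [[HPt HPtt] Ht1].
    assert (HPt1 : P < t).
    { replace P with (P / t * t) by (field; lra). nra. }
    assert (Hmono : sqrt_odds (P / t) / (2 * (1 - P / t)) <= sqrt_odds t / (2 * (1 - t))).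
    { unfold Rdiv at 2 4. apply Rmult_le_compat.
      - apply Rlt_le, sqrt_odds_pos. lra.
      - apply Rlt_le, Rinv_0_lt_compat. lra.
      - apply sqrt_odds_le; lra.
      - apply Rinv_le_contravar; lra. }
    replace (d t) with (/ t * (sqrt_odds t / (2 * (1 - t))
                                - sqrt_odds (P / t) / (2 * (1 - P / t))))
      by (unfold d; field; repeat split; lra).
    apply Rmult_le_pos; [apply Rlt_le, Rinv_0_lt_compat|]; lra. }
  destruct (Req_dec y z) as [<-|Hne]; [lra|].
  destruct (MVT_gen (fun t => sqrt_odds t + sqrt_odds (P / t)) y z d) as [t [Ht Heq]].
  - intros t Ht. rewrite Rmin_left, Rmax_right in Ht by lra. apply Hd. lra.
  - intros t Ht. rewrite Rmin_left, Rmax_right in Ht by lra.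
    apply continuity_pt_filterlim.
    apply (ex_derive_continuous (fun t => sqrt_odds t + sqrt_odds (P / t))).
    eexists. apply Hd, Ht.
  - rewrite Rmin_left, Rmax_right in Ht by lra.
    pose proof (Hd0 t Ht). nra.
Qed.

Lemma sqrt_odds_add_lt x y x' y' : 0 < y <= x -> x < 1 -> 0 < y' <= x' -> x' < 1 ->
  x < x' -> x * y < x' * y' -> sqrt_odds x + sqrt_odds y < sqrt_odds x' + sqrt_odds y'.
Proof.
  intros Hy Hx Hy' Hx' Hxx' Hprod.
  destruct (Rle_lt_dec y y') as [Hyy'|Hyy'].
  { pose proof (sqrt_odds_lt x x' ltac:(lra) Hxx' Hx').
    pose proof (sqrt_odds_le y y' ltac:(lra) Hyy' ltac:(lra)). lra. }
  set (z := x * y / y').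
  assert (Hxz : x < z) by (apply Rlt_div_r; nra).
  assert (Hzx' : z < x') by (apply Rlt_div_l; nra).
  pose proof (sqrt_odds_spread_le (x * y) x z) as H.
  specialize (H ltac:(nra) ltac:(lra) ltac:(nra) ltac:(lra) ltac:(lra)).
  replace (x * y / x) with y in H by (field; lra).
  replace (x * y / z) with y' in H by (unfold z; field; split; nra).
  pose proof (sqrt_odds_lt z x' ltac:(lra) Hzx' Hx'). lra.
Qed.

(* The product of the two arguments is [(1 - s^2) (u/X)^2 + s^2 K / X^3] with
   [K = (u^2 - r^2) X] common to both sides. *)
Lemma sqrt_odds_fold_lt u r X u' r' X' s :
  0 <= r -> r < u -> u + r < X -> r <= r' -> r' < u' -> u' + r' < X' -> X' < X ->
  (u ^ 2 - r ^ 2) * X = (u' ^ 2 - r' ^ 2) * X' -> 0 <= s <= 1 ->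
  sqrt_odds ((u + r * s) / X) + sqrt_odds ((u - r * s) / X)
  < sqrt_odds ((u' + r' * s) / X') + sqrt_odds ((u' - r' * s) / X').
Proof.
  intros Hr Hru HX Hrr Hru' HX' HXX HK Hs.
  assert (HX0 : 0 < X') by nra.
  pose (K := (u ^ 2 - r ^ 2) * X).
  assert (HK0 : 0 < K) by (apply Rmult_lt_0_compat; nra).
  assert (Huu : u < u').
  { assert (Hur : 0 < u ^ 2 - r ^ 2) by nra.
    assert (u ^ 2 - r ^ 2 < u' ^ 2 - r' ^ 2).
    { apply (Rmult_lt_reg_r X'); [lra|]. rewrite <- HK. apply Rmult_lt_compat_l; lra. }
    nra. }
  assert (Hrs : 0 <= r * s <= r) by nra.
  assert (Hrs' : 0 <= r' * s <= r') by nra.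
  assert (Hprod : forall v p Y, 0 < Y -> (v ^ 2 - p ^ 2) * Y = K ->
    (v + p * s) / Y * ((v - p * s) / Y) = (1 - s ^ 2) * (v / Y) ^ 2 + s ^ 2 * (K / Y ^ 3)).
  { intros v p Y HY HKY. rewrite <- HKY. field. lra. }
  assert (Hargs : forall v p Y, 0 <= p * s <= p -> p < v -> v + p < Y ->
    0 < (v - p * s) / Y <= (v + p * s) / Y /\ (v + p * s) / Y < 1).
  { intros v p Y Hps Hpv HY. split; [split|].
    - apply Rdiv_lt_0_compat; lra.
    - apply Rmult_le_compat_r; [apply Rlt_le, Rinv_0_lt_compat|]; lra.
    - apply Rlt_div_l; lra. }
  destruct (Hargs u r X) as [Hy Hx]; try lra.
  destruct (Hargs u' r' X') as [Hy' Hx']; try lra.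
  apply sqrt_odds_add_lt; try assumption.
  - apply Rlt_le_trans with ((u' + r' * s) / X).
    + apply Rmult_lt_compat_r; [apply Rinv_0_lt_compat|]; nra.
    + apply Rmult_le_compat_l; [nra|]. apply Rlt_le, Rinv_lt_contravar; nra.
  - rewrite (Hprod u r X), (Hprod u' r' X') by (unfold K; lra).
    assert (HuX : u / X < u' / X').
    { apply Rlt_le_trans with (u' / X).
      - apply Rmult_lt_compat_r; [apply Rinv_0_lt_compat|]; lra.
      - apply Rmult_le_compat_l; [nra|]. apply Rlt_le, Rinv_lt_contravar; nra. }
    assert (HKX : K / X ^ 3 < K / X' ^ 3).
    { apply Rmult_lt_compat_l; [lra|]. apply Rinv_lt_contravar.
      - apply Rmult_lt_0_compat; apply pow_lt; lra.
      - assert (X' * X' < X * X) by nra. simpl. nra. }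
    assert (0 < u / X) by (apply Rdiv_lt_0_compat; lra).
    assert ((u / X) ^ 2 < (u' / X') ^ 2) by nra.
    assert (Hs2 : 0 <= s ^ 2 <= 1) by nra.
    destruct (Rlt_or_le (s ^ 2) 1) as [Hs1|Hs1].
    + assert ((1 - s ^ 2) * (u / X) ^ 2 < (1 - s ^ 2) * (u' / X') ^ 2)
        by (apply Rmult_lt_compat_l; lra).
      assert (s ^ 2 * (K / X ^ 3) <= s ^ 2 * (K / X' ^ 3))
        by (apply Rmult_le_compat_l; lra).
      lra.
    + replace (s ^ 2) with 1 by lra. lra.
Qed.

Definition energy_cubic (C1 C2 C3 b phi : R) : R :=
  (C1 - phi) * (2 * b + phi ^ 2 + C2 * phi + C1 * C2) - C3.

Definition third_root (C1 C2 pm pp : R) : R := C1 - C2 - pm - pp.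

Definition reduced_integrand (C1 q pm pp t : R) : R :=
  sqrt_odds ((C1 - ((pm + pp) / 2 + (pp - pm) / 2 * sin t)) / (C1 - q)).

Lemma continuous_sqrt_odds_ratio C1 q x : q < x < C1 ->
  continuous (fun x => sqrt_odds ((C1 - x) / (C1 - q))) x.
Proof.
  intros Hx. apply (continuous_comp (fun x => (C1 - x) / (C1 - q)) sqrt_odds).
  - apply (ex_derive_continuous (fun x => (C1 - x) / (C1 - q))). auto_derive. lra.
  - apply continuous_sqrt_odds. split.
    + apply Rdiv_lt_0_compat; lra.
    + apply Rlt_div_l; lra.
Qed.

Lemma continuous_reduced_integrand C1 q pm pp t : q < pm -> pm < pp -> pp < C1 ->
  continuous (reduced_integrand C1 q pm pp) t.
Proof.
  intros Hq Hp HpC.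
  apply (continuous_arcsine_integrand (fun x => sqrt_odds ((C1 - x) / (C1 - q))) pm pp).
  - exact Hp.
  - intros x Hx. apply continuous_sqrt_odds_ratio. lra.
Qed.

Lemma energy_cubic_Upot C1 C2 C3 b phi : phi < C1 ->
  energy_cubic C1 C2 C3 b phi = (C1 - phi) * (2 * (b - Upot C1 C2 C3 phi)).
Proof. intros H. unfold energy_cubic, Upot. field. lra. Qed.

Lemma energy_cubic_shift C1 C2 C3 b b' phi :
  energy_cubic C1 C2 C3 b' phi = energy_cubic C1 C2 C3 b phi + 2 * (C1 - phi) * (b' - b).
Proof. unfold energy_cubic. ring. Qed.

Section Energy_level.

Variables C1 C2 C3 b pm pp : R.
Hypotheses (Hpm : pm < pp) (HpC : pp < C1).
Hypotheses (HUm : Upot C1 C2 C3 pm = b) (HUp : Upot C1 C2 C3 pp = b).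

(* The third root makes the [phi^2] coefficients agree, so the difference of the two
   cubics is affine; it vanishes at [pm] and [pp]. *)
Lemma energy_cubic_factor phi : energy_cubic C1 C2 C3 b phi =
  (phi - third_root C1 C2 pm pp) * (phi - pm) * (pp - phi).
Proof.
  assert (Hzero : forall x, x < C1 -> Upot C1 C2 C3 x = b -> energy_cubic C1 C2 C3 b x = 0).
  { intros x Hx HU. rewrite energy_cubic_Upot, HU by exact Hx. ring. }
  assert (Hinterp :
    (energy_cubic C1 C2 C3 b phi - (phi - third_root C1 C2 pm pp) * (phi - pm) * (pp - phi))
      * (pp - pm)
    = energy_cubic C1 C2 C3 b pm * (pp - phi) + energy_cubic C1 C2 C3 b pp * (phi - pm))
    by (unfold energy_cubic, third_root; ring).
  rewrite (Hzero pm), (Hzero pp) in Hinterp by (assumption || lra).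
  apply Rminus_diag_uniq, (Rmult_eq_reg_r (pp - pm)); [|lra].
  rewrite Hinterp. ring.
Qed.

Lemma third_root_lt x : x < pm -> b < Upot C1 C2 C3 x -> third_root C1 C2 pm pp < x.
Proof.
  intros Hx HU.
  pose proof (energy_cubic_Upot C1 C2 C3 b x ltac:(lra)) as E.
  rewrite energy_cubic_factor in E.
  assert (E' : (x - third_root C1 C2 pm pp) * ((pm - x) * (pp - x))
               = (C1 - x) * (2 * (Upot C1 C2 C3 x - b))) by lra.
  assert (0 < (C1 - x) * (2 * (Upot C1 C2 C3 x - b))) by (apply Rmult_lt_0_compat; lra).
  assert (0 < (pm - x) * (pp - x)) by (apply Rmult_lt_0_compat; lra).
  nra.
Qed.

Lemma turning_product :
  (C1 - third_root C1 C2 pm pp) * (C1 - pm) * (C1 - pp) = C3.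
Proof.
  pose proof (energy_cubic_factor C1) as E. unfold energy_cubic in E. nra.
Qed.

Lemma inv_sqrt_energy_gap x : third_root C1 C2 pm pp < pm -> pm < x < pp ->
  sqrt_odds ((C1 - x) / (C1 - third_root C1 C2 pm pp)) / sqrt ((x - pm) * (pp - x))
  = 1 / sqrt (2 * (b - Upot C1 C2 C3 x)).
Proof.
  intros Hq Hx. set (q := third_root C1 C2 pm pp) in *.
  assert (Hgap : 2 * (b - Upot C1 C2 C3 x) = (x - pm) * (pp - x) / ((C1 - x) / (x - q))).
  { apply (Rmult_eq_reg_l (C1 - x)); [|lra].
    rewrite <- energy_cubic_Upot, energy_cubic_factor by lra.
    fold q. field. lra. }
  rewrite Hgap. unfold sqrt_odds.
  replace ((C1 - x) / (C1 - q) / (1 - (C1 - x) / (C1 - q))) with ((C1 - x) / (x - q))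
    by (field; lra).
  assert (0 < (C1 - x) / (x - q)) by (apply Rdiv_lt_0_compat; lra).
  assert (0 < (x - pm) * (pp - x)) by (apply Rmult_lt_0_compat; lra).
  rewrite (sqrt_div_alt ((x - pm) * (pp - x))) by lra.
  assert (0 < sqrt ((C1 - x) / (x - q))) by (apply sqrt_lt_R0; lra).
  assert (0 < sqrt ((x - pm) * (pp - x))) by (apply sqrt_lt_R0; lra).
  field. lra.
Qed.

Lemma period_reduced : third_root C1 C2 pm pp < pm ->
  period C1 C2 C3 b pm pp
  = 2 * RInt (reduced_integrand C1 (third_root C1 C2 pm pp) pm pp) (- (PI / 2)) (PI / 2).
Proof.
  intros Hq. unfold period. f_equal. apply is_RInt_gen_unique.
  apply (is_RInt_gen_ext (fun x => sqrt_odds ((C1 - x) / (C1 - third_root C1 C2 pm pp))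
                                   / sqrt ((x - pm) * (pp - x)))).
  - generalize (filter_prod_at_right_at_left pm pp Hpm). apply filter_imp.
    intros uv Huv x Hx. apply inv_sqrt_energy_gap; [exact Hq|].
    apply Huv. lra.
  - apply (is_RInt_gen_arcsine (fun x => sqrt_odds ((C1 - x) / (C1 - third_root C1 C2 pm pp))));
      [exact Hpm|].
    intros x Hx. apply continuous_sqrt_odds_ratio. lra.
Qed.

End Energy_level.

Lemma turning_points_spread C1 C2 C3 b b' pm pp pm' pp' :
  b < b' -> pm < pp -> pp < C1 -> pm' < pp' -> pp' < C1 ->
  Upot C1 C2 C3 pm = b -> Upot C1 C2 C3 pp = b ->
  Upot C1 C2 C3 pm' = b' -> Upot C1 C2 C3 pp' = b' ->
  third_root C1 C2 pm' pp' < pm -> pm < pp' -> pm' < pp ->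
  third_root C1 C2 pm pp < third_root C1 C2 pm' pp' /\ pm' < pm /\ pp < pp'.
Proof.
  intros Hbb Hp HpC Hp' HpC' HUm HUp HUm' HUp' Hq'm Hmp' Hm'p.
  set (q := third_root C1 C2 pm pp) in *. set (q' := third_root C1 C2 pm' pp') in *.
  assert (Hshift : forall phi, phi < C1 ->
    (phi - q') * (phi - pm') * (pp' - phi)
    = (phi - q) * (phi - pm) * (pp - phi) + 2 * (C1 - phi) * (b' - b)).
  { intros phi Hphi.
    rewrite <- (energy_cubic_factor C1 C2 C3 b pm pp), <- (energy_cubic_factor C1 C2 C3 b' pm' pp')
      by assumption.
    apply energy_cubic_shift. }
  assert (Hgap : forall phi, phi < C1 -> 0 < 2 * (C1 - phi) * (b' - b))
    by (intros phi Hphi; apply Rmult_lt_0_compat; lra).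
  split; [|split].
  - pose proof (Hshift q' ltac:(lra)). pose proof (Hgap q' ltac:(lra)).
    assert (0 < (q' - pm) * (q' - pp)) by nra. nra.
  - pose proof (Hshift pm ltac:(lra)). pose proof (Hgap pm ltac:(lra)).
    assert (0 < (pm - q') * (pp' - pm)) by nra. nra.
  - pose proof (Hshift pp ltac:(lra)). pose proof (Hgap pp ltac:(lra)).
    assert (0 < (pp - q') * (pp - pm')) by nra. nra.
Qed.

Lemma reduced_integrand_fold_lt C1 q pm pp q' pm' pp' t :
  q < pm -> pm < pp -> pp < C1 -> q' < pm' -> pp' < C1 ->
  q < q' -> pm' < pm -> pp < pp' ->
  (C1 - q) * (C1 - pm) * (C1 - pp) = (C1 - q') * (C1 - pm') * (C1 - pp') -> 0 <= sin t ->
  reduced_integrand C1 q pm pp t + reduced_integrand C1 q pm pp (- t)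
  < reduced_integrand C1 q' pm' pp' t + reduced_integrand C1 q' pm' pp' (- t).
Proof.
  intros Hq Hp HpC Hq' HpC' Hqq Hmm Hpp HK Hs.
  pose proof (SIN_bound t).
  unfold reduced_integrand. rewrite sin_neg.
  assert (Hform : forall q pm pp,
    sqrt_odds ((C1 - ((pm + pp) / 2 + (pp - pm) / 2 * sin t)) / (C1 - q))
    + sqrt_odds ((C1 - ((pm + pp) / 2 + (pp - pm) / 2 * - sin t)) / (C1 - q))
    = sqrt_odds ((C1 - (pm + pp) / 2 + (pp - pm) / 2 * sin t) / (C1 - q))
    + sqrt_odds ((C1 - (pm + pp) / 2 - (pp - pm) / 2 * sin t) / (C1 - q))).
  { intros. rewrite Rplus_comm. do 3 f_equal; ring. }
  rewrite !Hform.
  apply sqrt_odds_fold_lt; lra.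
Qed.

Theorem lemma1 (C1 C2 C3 : R)
  (hC : 0 < C2 < C1) (hC3 : 0 < C3 < C3crit C1 C2)
  (phi1 phi2 phi3 : R) (hord : phi1 < phi2 < phi3)
  (hr1 : cubicC3 C1 C2 phi1 = C3) (hr2 : cubicC3 C1 C2 phi2 = C3)
  (hr3 : cubicC3 C1 C2 phi3 = C3)
  (b b' : R)
  (hb : Upot C1 C2 C3 phi2 < b) (hbb' : b < b') (hb' : b' < Upot C1 C2 C3 phi1)
  (pm pp pm' pp' : R)
  (hs : phi1 < pm /\ pm < phi2 /\ phi2 < pp /\ pp < C1)
  (hU : Upot C1 C2 C3 pm = b /\ Upot C1 C2 C3 pp = b)
  (hs' : phi1 < pm' /\ pm' < phi2 /\ phi2 < pp' /\ pp' < C1)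
  (hU' : Upot C1 C2 C3 pm' = b' /\ Upot C1 C2 C3 pp' = b') :
  period C1 C2 C3 b pm pp < period C1 C2 C3 b' pm' pp'.
Proof.
  destruct hs as (H1m & Hm2 & H2p & HpC), hs' as (H1m' & Hm2' & H2p' & HpC').
  destruct hU as [HUm HUp], hU' as [HUm' HUp'].
  assert (Hq : third_root C1 C2 pm pp < phi1) by (apply (third_root_lt C1 C2 C3 b); lra).
  assert (Hq' : third_root C1 C2 pm' pp' < phi1) by (apply (third_root_lt C1 C2 C3 b'); lra).
  destruct (turning_points_spread C1 C2 C3 b b' pm pp pm' pp') as (Hqq & Hmm & Hpp); try lra.
  rewrite (period_reduced C1 C2 C3 b pm pp), (period_reduced C1 C2 C3 b' pm' pp') by lra.
  apply Rmult_lt_compat_l; [lra|].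
  assert (HPI := PI_RGT_0).
  rewrite !RInt_fold by (intros; apply continuous_reduced_integrand; lra).
  apply RInt_lt; [lra| | |].
  1, 2: intros; apply continuous_fold; intros; apply continuous_reduced_integrand; lra.
  intros t Ht. apply reduced_integrand_fold_lt; try lra.
  - rewrite (turning_product C1 C2 C3 b pm pp), (turning_product C1 C2 C3 b' pm' pp') by lra.
    reflexivity.
  - apply sin_ge_0; lra.
Qed.
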